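(* Let $h$ be a hospital and let $\mathrm{Ch}_h$ be the choice function that, given $X'\subseteq X_h$ (with $\mathrm{Ch}_h(\emptyset)=\emptyset$), sorts $X'$ in non-decreasing order of wage (ties broken by a fixed order) as $x^{(1)},\dots,x^{(|X'|)}$, starts with $Y=\emptyset$, for $i=1,\dots,|X'|-1$ adds $x^{(i)}$ to $Y$ if $w_h(Y\cup\{x^{(i)}\})<B_h$, then adds $x^{(|X'|)}$ to $Y$ and returns $Y$. Then for every $X'\subseteq X_h$, $w_h(\mathrm{Ch}_h(X'))<B_h+\overline{w}_h$.
   Context: Hospital $h$ has a finite set $X_h$ of contracts $x$ with wages $x_W$, $0<x_W\le B_h$, where $B_h>0$ is its budget. $w_h(Y)=\sum_{x\in Y}x_W$, $\overline{w}_h=\max_{x\in X_h}x_W$. *)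

From mathcomp Require Import all_boot all_order all_algebra.
Set Implicit Arguments. Unset Strict Implicit. Unset Printing Implicit Defensive.
Import Order.TTheory GRing.Theory Num.Theory.
Local Open Scope ring_scope.

Section Hospital.
Variables (R : realFieldType) (T : finType).
(* T = X_h (contracts of hospital h); w x = x_W (wage); B = B_h (budget);
   tb = a fixed injective tie-breaking key. *)
Variables (w : T -> R) (B : R) (tb : T -> nat).

Definition wsum (Y : seq T) : R := \sum_(y <- Y) w y.

Definition wage_le : rel T :=
  fun x y => (w x < w y) || ((w x == w y) && (tb x <= tb y)%N).

Fixpoint greedy (Y : seq T) (s : seq T) : seq T :=
  match s with
  | [::] => Y
  | [:: x] => x :: Y
  | x :: s' => greedy (if wsum (x :: Y) < B then x :: Y else Y) s'
  end.

Definition Ch (X' : {set T}) : {set T} :=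
  [set x in greedy [::] (sort wage_le (enum X'))].

Definition wset (Y : {set T}) : R := \sum_(x in Y) w x.

(* \overline{w}_h = max wage (0 if X_h is empty) *)
Definition wmax : R := \big[Num.max/0]_(x : T) w x.
End Hospital.

From mathcomp Require Import all_boot all_order all_algebra.
Set Implicit Arguments. Unset Strict Implicit. Unset Printing Implicit Defensive.
Import Order.TTheory GRing.Theory Num.Theory.
Local Open Scope ring_scope.

(* An element other than the last one is only added while the running total
   stays below B, so the total before the last step is < B; the last step adds
   one wage, which is at most wmax.  Passing from the list to the set it spans
   only drops duplicates, which cannot increase a sum of nonnegative wages. *)

Section Greedy.
Variables (R : realFieldType) (T : finType) (w : T -> R).

Lemma le_wmax x : w x <= wmax w.
Proof. by rewrite /wmax (bigD1 x) //= le_max lexx. Qed.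

Lemma wmax_ge0 : 0 <= wmax w.
Proof. by rewrite /wmax; elim/big_rec: _ => // x m _ m_ge0; rewrite le_max m_ge0 orbT. Qed.

Lemma wsum_greedy_lt (B : R) (Y s : seq T) :
  wsum w Y < B -> wsum w (greedy w B Y s) < B + wmax w.
Proof.
elim: s Y => [|x [|y s] IHs] Y sumY_lt /=.
- by rewrite -[wsum w Y]addr0 ltr_leD // wmax_ge0.
- by rewrite /wsum big_cons -/(wsum w Y) addrC ltr_leD // le_wmax.
- by apply: IHs; case: ifP.
Qed.

Lemma wset_mem_seq (s : seq T) : wset w [set x in s] = wsum w (undup s).
Proof.
rewrite /wset /wsum (big_uniq _ (undup_uniq s)).
by apply: eq_bigl => x; rewrite inE mem_undup.
Qed.

Hypothesis w_ge0 : forall x, 0 <= w x.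

Lemma wsum_undup_le (s : seq T) : wsum w (undup s) <= wsum w s.
Proof.
rewrite /wsum; elim: s => [|x s IHs] //=; rewrite big_cons.
case: (x \in s) => /=; last by rewrite big_cons lerD2l.
by rewrite -[X in X <= _]add0r lerD.
Qed.

Lemma wset_le_wsum (s : seq T) : wset w [set x in s] <= wsum w s.
Proof. by rewrite wset_mem_seq wsum_undup_le. Qed.

End Greedy.

Theorem lemma6 (R : realFieldType) (T : finType) (w : T -> R) (B : R)
  (tb : T -> nat) (tb_inj : injective tb)
  (B_pos : 0 < B) (w_pos : forall x, 0 < w x) (w_le_B : forall x, w x <= B)
  (X' : {set T}) :
  wset w (Ch w B tb X') < B + wmax w.
Proof.
have w_ge0 x : 0 <= w x by exact: ltW.
apply: le_lt_trans (wset_le_wsum w_ge0 _) _.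
by apply: wsum_greedy_lt; rewrite /wsum big_nil.
Qed.
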